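(* Let $N\ge3$, $P>0$, $\tau\in(0,1)$, $\sigma_t>0$, $c_5\in\mathbb{C}$, $\alpha,\beta\in\mathbb{C}$ with $|\alpha|^2+|\beta|^2=1$. Let $\theta\in(-\pi/2,\pi/2)$ and $\mathbf{h}\in\mathbb{C}^N$ be random with $\mathbf{h}\notin\mathrm{span}(\mathbf{a}(\theta))$ almost surely. Let $\tilde{\mathbf{a}}=\mathbf{a}(\theta)/\|\mathbf{a}(\theta)\|$, $\tilde{\mathbf{h}}=\frac{\mathbf{h}-(\tilde{\mathbf{a}}^H\mathbf{h})\tilde{\mathbf{a}}}{\|\mathbf{h}-(\tilde{\mathbf{a}}^H\mathbf{h})\tilde{\mathbf{a}}\|}$, $\mathbf{t}_1=\alpha\tilde{\mathbf{a}}+\beta\tilde{\mathbf{h}}$, $\mathbf{t}_3,\dots,\mathbf{t}_N$ an orthonormal basis of the orthogonal complement of $\mathrm{span}\{\tilde{\mathbf{a}},\tilde{\mathbf{h}}\}$, and $$\mathrm{SINR}_t=\frac{P\tau|c_5|^2|\mathbf{a}^H\mathbf{t}_1|^2}{\sigma_t^2+\frac{|c_5|^2P(1-\tau)}{N-2}\sum_{i=3}^N|\mathbf{a}^H\mathbf{t}_i|^2}.$$ Then $\mathbb{E}_{\mathbf{h},\theta}[\log(1+\mathrm{SINR}_t)]=\log\big(1+\frac{P\tau|c_5|^2|\alpha|^2N}{\sigma_t^2}\big)$.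
   Context: $j=\sqrt{-1}$. $\mathbf{a}(\theta)\in\mathbb{C}^N$ has $i$-th entry $e^{-j\pi\sin(\theta)\frac{N-(2i-1)}{2}}$. $\mathrm{SINR}_t$ is the SINR at a malicious target acting as communication eavesdropper under the SSJB scheme; the quantity computed is the ergodic information leakage rate to the target. *)

From HB Require Import structures.
From mathcomp Require Import all_boot all_order all_algebra.
From mathcomp Require Import all_classical all_reals all_analysis.
From mathcomp Require Import complex.
Unset Printing Implicit Defensive.
Import Order.TTheory GRing.Theory Num.Theory.
Local Open Scope ring_scope.
Local Open Scope complex_scope.

Definition cabs {R : realType} (z : R[i]) : R := Normc.normc z.

(* steering vector a(theta): i-th entry (1-based i) is
   exp(-j pi sin(theta) (N-(2i-1))/2) = cos x - j sin x.
   With 0-based k = i-1, N-(2i-1) = N-(2k+1). *)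
Definition steer {R : realType} (N : nat) (th : R) : 'cV[R[i]]_N :=
  \col_(k < N)
    let x := pi * sin th * ((N%:R - (2 * k + 1)%:R) / 2) in
    (cos x)%:C - 'i * (sin x)%:C.

Definition hdot {R : realType} {N : nat} (u v : 'cV[R[i]]_N) : R[i] :=
  \sum_(k < N) (u k 0)^* * v k 0.

Definition vnorm {R : realType} {N : nat} (u : 'cV[R[i]]_N) : R :=
  Num.sqrt (\sum_(k < N) cabs (u k 0) ^+ 2).

Definition in_span1 {R : realType} {N : nat} (a v : 'cV[R[i]]_N) : Prop :=
  exists c : R[i], v = c *: a.

Definition atil {R : realType} (N : nat) (th : R) : 'cV[R[i]]_N :=
  ((vnorm (steer N th))^-1)%:C *: steer N th.

Definition htil {R : realType} {N : nat} (th : R) (h : 'cV[R[i]]_N)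
  : 'cV[R[i]]_N :=
  let hp := h - hdot (atil N th) h *: atil N th in
  ((vnorm hp)^-1)%:C *: hp.

Definition t1 {R : realType} {N : nat} (al be : R[i]) (th : R)
  (h : 'cV[R[i]]_N) : 'cV[R[i]]_N :=
  al *: atil N th + be *: htil th h.

(* t : 'I_(N-2) -> C^N (t j stands for t_{j+3}) is an orthonormal basis of
   the orthogonal complement of span{a~, h~}. *)
Definition onb_compl {R : realType} {N : nat} (th : R) (h : 'cV[R[i]]_N)
  (t : 'I_(N - 2) -> 'cV[R[i]]_N) : Prop :=
  [/\ (forall j k, hdot (t j) (t k) = (j == k)%:R),
      (forall j, hdot (atil N th) (t j) = 0 /\ hdot (htil th h) (t j) = 0) &
      (forall v, hdot (atil N th) v = 0 -> hdot (htil th h) v = 0 ->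
         exists c : 'I_(N - 2) -> R[i], v = \sum_(j < N - 2) c j *: t j)].

Definition SINRt {R : realType} {N : nat} (P tau sig : R) (c5 al be : R[i])
  (th : R) (h : 'cV[R[i]]_N) (t : 'I_(N - 2) -> 'cV[R[i]]_N) : R :=
  let a := steer N th in
  (P * tau * cabs c5 ^+ 2 * cabs (hdot a (t1 al be th h)) ^+ 2) /
  (sig ^+ 2 + cabs c5 ^+ 2 * P * (1 - tau) / (N - 2)%:R *
     \sum_(j < N - 2) cabs (hdot a (t j)) ^+ 2).

(* Off the null event h in span(a), the SINR at the target is deterministic:
   a = sqrt N * a~, and since a~ is orthogonal to h~ and to every t_i (i >= 3)
   we get a^H t_1 = sqrt N * alpha while the interference sum vanishes, so
   SINR_t = P tau |c5|^2 |alpha|^2 N / sig^2 almost surely.  The expectation of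
   an almost surely constant function is that constant; as the integrand is not
   assumed measurable, this is proved by squeezing its positive and negative
   parts between the measurable functions k 1_(~N) and k + oo 1_N. *)

From mathcomp Require Import all_boot all_order all_algebra.
From mathcomp Require Import all_classical all_reals all_analysis.
From mathcomp Require Import complex ring lra measurable_realfun.
Import Order.TTheory GRing.Theory Num.Theory.
Local Open Scope ring_scope.
Local Open Scope complex_scope.
Local Open Scope classical_set_scope.

Section hdot_linear.
Variables (R : realType) (N : nat).
Implicit Types (u v w : 'cV[R[i]]_N) (c : R[i]).

Lemma hdotZr u c v : hdot u (c *: v) = c * hdot u v.
Proof.
by rewrite /hdot mulr_sumr; apply: eq_bigr => k _; rewrite mxE mulrCA.
Qed.

Lemma hdotZl u c v : hdot (c *: u) v = c^* * hdot u v.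
Proof.
by rewrite /hdot mulr_sumr; apply: eq_bigr => k _; rewrite mxE rmorphM mulrA.
Qed.

Lemma hdotDr u v w : hdot u (v + w) = hdot u v + hdot u w.
Proof.
by rewrite /hdot -big_split; apply: eq_bigr => k _; rewrite mxE mulrDr.
Qed.

Lemma hdotBr u v w : hdot u (v - w) = hdot u v - hdot u w.
Proof. by rewrite /hdot -sumrB; apply: eq_bigr => k _; rewrite !mxE mulrBr. Qed.

Lemma hdot_sub_proj u v : hdot u u = 1 -> hdot u (v - hdot u v *: u) = 0.
Proof. by move=> uu; rewrite hdotBr hdotZr uu mulr1 subrr. Qed.

End hdot_linear.

(* [^*] on [R[i]] is [Num.conj]; [conjc_real] states this for [conjc]. *)
Lemma conj_real_complex (R : realType) (r : R) : Num.conj (r%:C) = r%:C :> R[i].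
Proof. exact: conjc_real. Qed.

Lemma mul_conj_cabs (R : realType) (z : R[i]) : z^* * z = (cabs z ^+ 2)%:C.
Proof.
case: z => a b; rewrite /cabs /= sqr_sqrtr ?addr_ge0 ?sqr_ge0//.
by apply/eqP; rewrite eq_complex /=; apply/andP; split; apply/eqP; ring.
Qed.

Lemma cabs_realM (R : realType) (r : R) (z : R[i]) :
  cabs (r%:C * z) = `|r| * cabs z.
Proof. by rewrite /cabs Normc.normcM /= expr0n addr0 sqrtr_sqr. Qed.

Section steering_vector.
Variables (R : realType) (N : nat) (th : R).

Lemma cabs_steer k : cabs (steer N th k 0) = 1.
Proof.
rewrite /steer mxE /cabs; set x := (pi * _ * _).
have -> : (cos x)%:C - 'i * (sin x)%:C = Complex (cos x) (- sin x).
  by apply/eqP; rewrite eq_complex /=; apply/andP; split; apply/eqP; ring.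
by rewrite /= sqrrN cos2Dsin2 sqrtr1.
Qed.

Lemma hdot_steer_steer : hdot (steer N th) (steer N th) = N%:R.
Proof.
rewrite /hdot; under eq_bigr => k _ do rewrite mul_conj_cabs cabs_steer expr1n.
by rewrite sumr_const card_ord.
Qed.

Lemma vnorm_steer : vnorm (steer N th) = Num.sqrt N%:R.
Proof.
rewrite /vnorm; under eq_bigr => k _ do rewrite cabs_steer expr1n.
by rewrite sumr_const card_ord.
Qed.

Hypothesis N_gt0 : (0 < N)%N.

Let sqrtN_gt0 : 0 < Num.sqrt N%:R :> R.
Proof. by rewrite sqrtr_gt0 ltr0n. Qed.

Lemma hdot_steerl v :
  hdot (steer N th) v = (Num.sqrt N%:R)%:C * hdot (atil N th) v.
Proof.
rewrite /atil vnorm_steer hdotZl conj_real_complex mulrA -rmorphM.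
by rewrite divff ?mul1r// gt_eqF.
Qed.

Lemma hdot_atil_atil : hdot (atil N th) (atil N th) = 1.
Proof.
rewrite /atil hdotZl hdotZr hdot_steer_steer conj_real_complex vnorm_steer.
rewrite -(rmorph_nat (real_complex R)) -!rmorphM mulrA -expr2 exprVn.
by rewrite sqr_sqrtr ?ler0n// mulVf ?pnatr_eq0 -?lt0n.
Qed.

End steering_vector.

Lemma hdot_atil_htil (R : realType) (N : nat) (th : R) (h : 'cV[R[i]]_N) :
  (0 < N)%N -> hdot (atil N th) (htil th h) = 0.
Proof.
move=> N_gt0; rewrite /htil hdotZr hdot_sub_proj ?mulr0//.
exact: hdot_atil_atil.
Qed.

Lemma hdot_atil_t1 (R : realType) (N : nat) (al be : R[i]) (th : R)
    (h : 'cV[R[i]]_N) :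
  (0 < N)%N -> hdot (atil N th) (t1 al be th h) = al.
Proof.
move=> N_gt0; rewrite /t1 hdotDr (hdotZr _ _ _ al) (hdotZr _ _ _ be).
by rewrite hdot_atil_atil// hdot_atil_htil// mulr1 mulr0 addr0.
Qed.

Lemma SINRt_onb_compl (R : realType) (N : nat) (P tau sig : R) (c5 al be : R[i])
    (th : R) (h : 'cV[R[i]]_N) (t : 'I_(N - 2) -> 'cV[R[i]]_N) :
  (0 < N)%N -> onb_compl th h t ->
  SINRt P tau sig c5 al be th h t =
  P * tau * cabs c5 ^+ 2 * cabs al ^+ 2 * N%:R / sig ^+ 2.
Proof.
move=> N_gt0 [_ t_orth _].
have leak0 : \sum_(j < N - 2) cabs (hdot (steer N th) (t j)) ^+ 2 = 0.
  apply: big1 => j _; rewrite hdot_steerl// (t_orth j).1 mulr0.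
  by rewrite /cabs Normc.normc0 expr0n.
rewrite /SINRt leak0 mulr0 addr0 hdot_steerl// hdot_atil_t1// cabs_realM.
by rewrite exprMn ger0_norm ?sqrtr_ge0// sqr_sqrtr ?ler0n//; ring.
Qed.

Section ae_constant_integral.
Context d (T : measurableType d) (R : realType).
Variable mu : {measure set T -> \bar R}.
Local Open Scope ereal_scope.

Lemma ge0_le_integralT (f g : T -> \bar R) :
  (forall x, 0 <= f x) -> (forall x, f x <= g x) ->
  \int[mu]_x f x <= \int[mu]_x g x.
Proof.
move=> f0 fg; have g0 x : 0 <= g x by exact: le_trans (f0 x) (fg x).
rewrite !ge0_integralTE//; apply: ereal_sup_le => _ [s /= sf <-].
by exists s => //= x; exact: le_trans (sf x) (fg x).
Qed.

Lemma measure_setC_null (N : set T) : measurable N -> mu N = 0 ->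
  mu (~` N) = mu setT.
Proof.
by move=> mN N0; rewrite -(setvU N) measureU0//; exact: measurableC.
Qed.

Lemma ge0_ae_cst_integral (f : T -> \bar R) (k : R) (N : set T) :
  measurable N -> mu N = 0 -> (forall x, 0 <= f x) -> (0 <= k)%R ->
  (forall x, ~ N x -> f x = k%:E) ->
  \int[mu]_x f x = k%:E * mu setT.
Proof.
move=> mN N0 f0 k0 fk.
have mCN : measurable (~` N) by exact: measurableC.
have <- : \int[mu]_(x in ~` N) (cst k%:E) x = k%:E * mu setT.
  by rewrite integral_cst// measure_setC_null.
apply/le_anti/andP; split.
- pose g : T -> \bar R := (cst +oo) \_ N \+ cst k%:E.
  have g0 x : 0 <= g x.
    by rewrite adde_ge0 ?lee_fin//; apply: erestrict_ge0 => y _; exact: leey.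
  have mg : measurable_fun setT g.
    apply: emeasurable_funD => //.
    by apply/(measurable_restrictT _ mN).1; exact: measurable_cst.
  apply: (le_trans (@ge0_le_integralT f g f0 _)).
    move=> x; rewrite /g /= /patch; case: ifPn => [_|/negP xN].
      by rewrite addye ?leey.
    by rewrite add0e fk // => /mem_set /xN.
  rewrite (ge0_negligible_integral mN)// setTD (eq_integral (cst k%:E))//.
  by move=> x /[!inE] xN; rewrite /g /= /patch memNset ?add0e.
- rewrite integral_mkcond; apply: ge0_le_integralT => x.
    by apply: erestrict_ge0 => y _; rewrite lee_fin.
  by rewrite /patch; case: ifPn => [/set_mem/fk ->|_].
Qed.
End ae_constant_integral.
Arguments ge0_ae_cst_integral {d T R mu f k N}.

Section probability_ae_cst.
Local Open Scope ereal_scope.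

Lemma integral_ae_cst d (T : measurableType d) (R : realType)
  (P : probability T R) (f : T -> \bar R) (k : R) (N : set T) :
  measurable N -> P N = 0 -> (forall x, ~ N x -> f x = k%:E) ->
  \int[P]_x f x = k%:E.
Proof.
move=> mN PN0 fk.
have max0 (r : R) : (0 <= Num.max r 0)%R by rewrite le_max lexx orbT.
rewrite integralE.
rewrite (ge0_ae_cst_integral mN PN0 (funepos_ge0 f) (max0 k)); last first.
  by move=> x /fk fxk; rewrite funeposE fxk EFin_max.
rewrite (ge0_ae_cst_integral mN PN0 (funeneg_ge0 f) (max0 (- k)%R)); last first.
  by move=> x /fk fxk; rewrite funenegE fxk EFin_max.
have := probability_setT P; rewrite /= => ->.
rewrite !mule1 -EFinB; congr EFin.
by rewrite /Order.max; do 2 case: ifPn => /= ?; lra.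
Qed.
End probability_ae_cst.
Arguments integral_ae_cst {d T R P f k N}.

Theorem lemma12 (R : realType) (d : measure_display) (T : measurableType d)
  (Pr : probability T R) (N : nat) (P tau sig : R) (c5 al be : R[i])
  (th : T -> R) (h : T -> 'cV[R[i]]_N)
  (t : T -> 'I_(N - 2) -> 'cV[R[i]]_N) :
  (3 <= N)%N -> 0 < P -> 0 < tau < 1 -> 0 < sig ->
  cabs al ^+ 2 + cabs be ^+ 2 = 1 ->
  (forall w, - (pi / 2) < th w < pi / 2) ->
  {ae Pr, forall w, ~ in_span1 (steer N (th w)) (h w)} ->
  (forall w, ~ in_span1 (steer N (th w)) (h w) ->
     onb_compl (th w) (h w) (t w)) ->
  (\int[Pr]_w (ln (1 + SINRt P tau sig c5 al be (th w) (h w) (t w)))%:E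
   = (ln (1 + P * tau * cabs c5 ^+ 2 * cabs al ^+ 2 * N%:R / sig ^+ 2))%:E)%E.
Proof.
move=> N_ge3 _ _ _ _ _ [M [mM PrM0 spanM]] onb.
have N_gt0 : (0 < N)%N by exact: leq_trans N_ge3.
apply: (integral_ae_cst mM PrM0) => w Mw; rewrite SINRt_onb_compl//.
by apply: onb => span_w; apply: Mw; apply: spanM => /=; apply.
Qed.
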